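(* Let $\Lambda$ be a row-finite $k$-graph with no sources and $R$ a commutative ring with $1$. Let $(\alpha,\beta)\in\Sigma$ and $x\in\mathfrak{T}_\Lambda$. (a) If $x\notin F_{\alpha,\beta}$, then there exist $\mu,\nu\in\Lambda$ such that $x\in Z(\mu)\cap Z(\nu)$ and $s_\mu s_{\mu^*}s_\alpha s_{\beta^*}s_\nu s_{\nu^*}=0$ in ${\rm KP}_R(\Lambda)$. (b) If $x\in F_{\alpha,\beta}$, then there exists $\gamma\in\Lambda$ with $x\in Z(\alpha\gamma)\cap Z(\beta\gamma)$, $s_{\alpha\gamma}s_{(\alpha\gamma)^*}s_\alpha s_{\beta^*}s_{\beta\gamma}s_{(\beta\gamma)^*}=s_{\alpha\gamma}s_{(\beta\gamma)^*}$, and $(\alpha\gamma,\beta\gamma)$ a cycline pair.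
   Context: A $k$-graph is a countable category $\Lambda$ (vertices $\Lambda^0$, paths, maps $r,s$) with a degree functor $d:\Lambda\to\mathbb{N}^k$ satisfying unique factorization: if $d(\lambda)=m+n$ there are unique $\mu,\nu$ with $s(\mu)=r(\nu)$, $d(\mu)=m,d(\nu)=n$, $\lambda=\mu\nu$. $v\Lambda=\{\lambda:r(\lambda)=v\}$, $v\Lambda^n$ those of degree $n$; row-finite with no sources means each $v\Lambda^n$ is finite and nonempty. ${\rm KP}_R(\Lambda)$ is the universal $R$-algebra generated by $p_v$ ($v\in\Lambda^0$), $s_\lambda,s_{\lambda^*}$ ($d(\lambda)\ne0$) with relations (KP1) $p_v$ mutually orthogonal idempotents; (KP2) $s_\lambda s_\mu=s_{\lambda\mu}$, $s_{\mu^*}s_{\lambda^*}=s_{(\lambda\mu)^*}$, $p_{r(\lambda)}s_\lambda=s_\lambda=s_\lambda p_{s(\lambda)}$, $p_{s(\lambda)}s_{\lambda^*}=s_{\lambda^*}=s_{\lambda^*}p_{r(\lambda)}$ when $r(\mu)=s(\lambda)$; (KP3) $s_{\lambda^*}s_\mu=\delta_{\lambda,\mu}p_{s(\lambda)}$ when $d(\lambda)=d(\mu)$; (KP4) $p_v=\sum_{\lambda\in v\Lambda^n}s_\lambda s_{\lambda^*}$ for $n\ne0$. Convention $s_v=s_{v^*}=p_v$. A pair $(\alpha,\beta)$ with $s(\alpha)=s(\beta)$ is cycline if $s_{\alpha\gamma}s_{(\alpha\gamma)^*}=s_{\beta\gamma}s_{(\beta\gamma)^*}$ for all $\gamma\in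 s(\alpha)\Lambda$. Let $\Omega_k$ be the $k$-graph with objects $\mathbb{N}^k$, morphisms $\{(p,q):p\le q\}$, $r(p,q)=p$, $s(p,q)=q$, $(p,q)(q,t)=(p,t)$, $d(p,q)=q-p$. An infinite path is a degree-preserving functor $x:\Omega_k\to\Lambda$; $\Lambda^\infty$ is the set of infinite paths. For $\mu\in\Lambda$, $Z(\mu)=\{x\in\Lambda^\infty: x(0,d(\mu))=\mu\}$; these cylinder sets form a basis of compact open sets for a Hausdorff topology on $\Lambda^\infty$. For $p\in\mathbb{N}^k$, $\sigma^p:\Lambda^\infty\to\Lambda^\infty$ is $\sigma^p(x)(m,n)=x(m+p,n+p)$. Let $\Sigma=\{(\alpha,\beta)\in\Lambda\times\Lambda: s(\alpha)=s(\beta),\ \alpha\ne\beta\}$; for $(\alpha,\beta)\in\Sigma$ let $F_{\alpha,\beta}=\{x\in Z(\alpha)\cap Z(\beta): \sigma^{d(\alpha)}(x)=\sigma^{d(\beta)}(x)\}$. The set of regular paths is $\mathfrak{T}_\Lambda=\Lambda^\infty\setminus\bigcup_{(\alpha,\beta)\in\Sigma}\partial F_{\alpha,\beta}$, where $\partial$ denotes topological boundary. *)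

From HB Require Import structures.
From mathcomp Require Import all_boot all_order all_algebra.
From Stdlib Require Import List.
Set Implicit Arguments. Unset Strict Implicit. Unset Printing Implicit Defensive.
Import GRing.Theory.
Local Open Scope ring_scope.

Definition NN (k : nat) := {ffun 'I_k -> nat}.
Definition nzero {k} : NN k := [ffun => 0%N].
Definition nadd {k} (m n : NN k) : NN k := [ffun i => (m i + n i)%N].
Definition nsub {k} (m n : NN k) : NN k := [ffun i => (m i - n i)%N].
Definition nle {k} (m n : NN k) : Prop := forall i, (m i <= n i)%N.

(* k-graphs: countable categories with a degree functor into N^k      *)
(* satisfying unique factorisation.  The (partial) composition is      *)
(* encoded by a total function [pcat], constrained only on composable  *)
(* pairs; [pcat mu nu] is the path "mu nu" (mu followed by nu, with    *)
(* s(mu) = r(nu)).                                                     *)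
Record kgraph (k : nat) := KGraph {
  Vx : Type;
  Pth : Type;
  rg : Pth -> Vx;
  sc : Pth -> Vx;
  idp : Vx -> Pth;
  pcat : Pth -> Pth -> Pth;
  dg : Pth -> NN k;
  Vx_countable : exists f : Vx -> nat, injective f;
  Pth_countable : exists f : Pth -> nat, injective f;
  rg_idp : forall v, rg (idp v) = v;
  sc_idp : forall v, sc (idp v) = v;
  pcomp_idl : forall l, pcat (idp (rg l)) l = l;
  pcomp_idr : forall l, pcat l (idp (sc l)) = l;
  rg_comp : forall m n, sc m = rg n -> rg (pcat m n) = rg m;
  sc_comp : forall m n, sc m = rg n -> sc (pcat m n) = sc n;
  comp_assoc : forall a b c, sc a = rg b -> sc b = rg c ->
      pcat (pcat a b) c = pcat a (pcat b c);
  dg_idp : forall v, dg (idp v) = nzero;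
  dg_comp : forall m n, sc m = rg n -> dg (pcat m n) = nadd (dg m) (dg n);
  factor_ex : forall l (m n : NN k), dg l = nadd m n ->
      exists mu nu, sc mu = rg nu /\ dg mu = m /\ dg nu = n /\ l = pcat mu nu;
  factor_uniq : forall mu nu mu' nu',
      sc mu = rg nu -> sc mu' = rg nu' ->
      dg mu = dg mu' -> dg nu = dg nu' -> pcat mu nu = pcat mu' nu' ->
      mu = mu' /\ nu = nu'
}.

Arguments rg {k L} _ : rename.
Arguments sc {k L} _ : rename.
Arguments idp {k L} _ : rename.
Arguments pcat {k L} _ _ : rename.
Arguments dg {k L} _ : rename.

Definition row_finite_no_sources {k} (L : kgraph k) : Prop :=
  forall (v : Vx L) (n : NN k),
    (exists l : list (Pth L), forall lam, In lam l <-> (rg lam = v /\ dg lam = n))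
    /\ (exists lam : Pth L, rg lam = v /\ dg lam = n).

(* Kumjian-Pask families in (unital) R-algebras.  An identity holds in  *)
(* KP_R(Lambda) iff it holds for every Kumjian-Pask family in every     *)
(* R-algebra (universal property; the nonunital universal algebra       *)
(* embeds in its unitisation).  Convention s_v = s_{v^*} = p_v is built *)
(* in: p_v := ks (idp v), and ks/kss are defined on all paths.          *)
Record KPfamily {k} (L : kgraph k) (R : comNzRingType) (A : algType R) := KPFam {
  ks : Pth L -> A;
  kss : Pth L -> A;
  kp := fun v => ks (idp v);
  KP0 : forall v, kss (idp v) = kp v;
  KP1a : forall v, kp v * kp v = kp v;
  KP1b : forall v w, v <> w -> kp v * kp w = 0;
  KP2a : forall l m, sc l = rg m -> ks l * ks m = ks (pcat l m);
  KP2b : forall l m, sc l = rg m -> kss m * kss l = kss (pcat l m);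
  KP2c : forall l, kp (rg l) * ks l = ks l /\ ks l * kp (sc l) = ks l;
  KP2d : forall l, kp (sc l) * kss l = kss l /\ kss l * kp (rg l) = kss l;
  KP3a : forall l, kss l * ks l = kp (sc l);
  KP3b : forall l m, dg l = dg m -> l <> m -> kss l * ks m = 0;
  KP4 : forall (v : Vx L) (n : NN k), n <> nzero ->
      forall l : list (Pth L), NoDup l ->
      (forall lam, In lam l <-> (rg lam = v /\ dg lam = n)) ->
      kp v = \sum_(lam <- l) ks lam * kss lam
}.

Arguments ks {k L R A} _ _.
Arguments kss {k L R A} _ _.

(* An element of KP_R(Lambda), described as a function of the KP family,
   vanishes / two such coincide in KP_R(Lambda). *)
Definition KP_eq {k} (L : kgraph k) (R : comNzRingType)
  (e1 e2 : forall (A : algType R), KPfamily L A -> A) : Prop :=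
  forall (A : algType R) (S : KPfamily L A), e1 A S = e2 A S.

Arguments KP_eq {k} L R e1 e2.

Definition cycline {k} (L : kgraph k) (R : comNzRingType) (a b : Pth L) : Prop :=
  sc a = sc b /\
  forall g : Pth L, rg g = sc a ->
    KP_eq L R (fun A S => ks S (pcat a g) * kss S (pcat a g))
            (fun A S => ks S (pcat b g) * kss S (pcat b g)).

Arguments cycline {k} L R a b.

(* Infinite paths: degree-preserving functors Omega_k -> Lambda.        *)
(* The morphism (p,q) (p <= q) is sent to [ipath x p q]; values for     *)
(* p not <= q are irrelevant.                                           *)
Record infpath {k} (L : kgraph k) := InfPath {
  ipath : NN k -> NN k -> Pth L;
  ipath_id : forall p, ipath p p = idp (rg (ipath p p));
  ipath_dg : forall p q, nle p q -> dg (ipath p q) = nsub q p;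
  ipath_comp : forall p q t, nle p q -> nle q t ->
      sc (ipath p q) = rg (ipath q t) /\ pcat (ipath p q) (ipath q t) = ipath p t
}.

Arguments ipath {k L} _ _ _.

Definition Zcyl {k} {L : kgraph k} (mu : Pth L) (x : infpath L) : Prop :=
  ipath x nzero (dg mu) = mu.

Definition is_open {k} {L : kgraph k} (U : infpath L -> Prop) : Prop :=
  forall x, U x -> exists mu : Pth L, Zcyl mu x /\ forall y, Zcyl mu y -> U y.

Definition tinterior {k} {L : kgraph k} (F : infpath L -> Prop) (x : infpath L) : Prop :=
  exists U, is_open U /\ U x /\ forall y, U y -> F y.

Definition tclosure {k} {L : kgraph k} (F : infpath L -> Prop) (x : infpath L) : Prop :=
  forall U, is_open U -> U x -> exists y, U y /\ F y.

Definition boundary {k} {L : kgraph k} (F : infpath L -> Prop) (x : infpath L) : Prop :=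
  tclosure F x /\ ~ tinterior F x.

(* F_{alpha,beta} = { x in Z(alpha) cap Z(beta) : sigma^{d alpha} x = sigma^{d beta} x } ;
   equality of infinite paths = equality of the functors on all morphisms (m,n), m <= n. *)
Definition Fab {k} {L : kgraph k} (a b : Pth L) (x : infpath L) : Prop :=
  Zcyl a x /\ Zcyl b x /\
  forall m n : NN k, nle m n ->
    ipath x (nadd m (dg a)) (nadd n (dg a)) = ipath x (nadd m (dg b)) (nadd n (dg b)).

Definition inSigma {k} {L : kgraph k} (a b : Pth L) : Prop := sc a = sc b /\ a <> b.

Definition regular {k} {L : kgraph k} (x : infpath L) : Prop :=
  forall a b : Pth L, inSigma a b -> ~ boundary (Fab a b) x.

(* (a) If x misses Z(a), the initial segment mu of x of degree d(a) differs
   from a, so s_mu^* s_a = 0 (symmetrically for b).  Otherwise sigma^{d a} x and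
   sigma^{d b} x differ somewhere, so the segments m' and n' of x of a common
   degree following a and b differ; for mu = a m' and nu = b n' the product
   collapses to s_mu s_m'^* s_n' s_nu^* = 0.
   (b) Regularity puts x in the interior of F_{a,b}: Z(mu) is inside F_{a,b}
   for an initial segment mu of x.  The segment g of x of degree d(mu) after a
   is also the one after b, and Z(a g), Z(b g) lie in Z(mu), hence in F_{a,b};
   so Z(a g h) = Z(b g h) for every h.  Paths with equal cylinder sets have
   equal range projections s_l s_l^*: expand p_{r(l)} over the paths of a large
   common degree D and note that such a path extends l iff it extends l', since
   every finite path extends to an infinite one (no sources). *)

From HB Require Import structures.
From mathcomp Require Import all_boot all_order all_algebra.
From Stdlib Require Import List Classical ClassicalEpsilon.
Set Implicit Arguments. Unset Strict Implicit. Unset Printing Implicit Defensive.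
Import GRing.Theory.
Local Open Scope ring_scope.

Section Degrees.
Context {k : nat}.
Implicit Types m n p : NN k.

Definition nunit : NN k := [ffun => 1%N].

Lemma nadd0n n : nadd nzero n = n.
Proof. by apply/ffunP => i; rewrite !ffunE add0n. Qed.

Lemma naddC m n : nadd m n = nadd n m.
Proof. by apply/ffunP => i; rewrite !ffunE addnC. Qed.

Lemma nsubn0 n : nsub n nzero = n.
Proof. by apply/ffunP => i; rewrite !ffunE subn0. Qed.

Lemma naddKn m n : nsub (nadd m n) m = n.
Proof. by apply/ffunP => i; rewrite !ffunE addKn. Qed.

Lemma naddnK m n : nsub (nadd n m) m = n.
Proof. by apply/ffunP => i; rewrite !ffunE addnK. Qed.

Lemma nsubnn n : nsub n n = nzero.
Proof. by apply/ffunP => i; rewrite !ffunE subnn. Qed.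

Lemma nsubnKC m n : nle m n -> nadd m (nsub n m) = n.
Proof. by move=> mn; apply/ffunP => i; rewrite !ffunE subnKC. Qed.

Lemma nsubnDr p m n : nsub (nadd m p) (nadd n p) = nsub m n.
Proof. by apply/ffunP => i; rewrite !ffunE subnDr. Qed.

Lemma nle0n n : nle nzero n.
Proof. by move=> i; rewrite ffunE. Qed.

Lemma nle_addr m n : nle m (nadd m n).
Proof. by move=> i; rewrite ffunE leq_addr. Qed.

Lemma nle_addl m n : nle m (nadd n m).
Proof. by move=> i; rewrite ffunE leq_addl. Qed.

Lemma nle_add2r p m n : nle m n -> nle (nadd m p) (nadd n p).
Proof. by move=> mn i; rewrite !ffunE leq_add2r. Qed.

Lemma nadd_nunit_neq0 m : (0 < k)%N -> nadd m nunit <> nzero.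
Proof. by move=> k_gt0 /(congr1 (fun f : NN k => f (Ordinal k_gt0))); rewrite !ffunE addn1. Qed.

End Degrees.

Section Paths.
Context {k : nat} {L : kgraph k}.
Implicit Types (a b e g h l m mu s : Pth L) (x y z : infpath L).

Lemma dg0_idp l : dg l = nzero -> l = idp (rg l).
Proof.
move=> l0.
have [] := @factor_uniq _ L (idp (rg l)) l l (idp (sc l)); rewrite ?rg_idp ?sc_idp //.
- by rewrite dg_idp l0.
- by rewrite dg_idp l0.
- by rewrite pcomp_idl pcomp_idr.
Qed.

Lemma inSigma_dim_gt0 a b : inSigma a b -> (0 < k)%N.
Proof.
case=> sab; apply: contra_notT; rewrite -eqn0Ngt => /eqP k0.
have dg0 l : dg l = nzero by apply/ffunP => -[i hi]; exfalso; move: hi; rewrite k0.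
have sc_rg l : sc l = rg l by rewrite {1}(dg0_idp (dg0 l)) sc_idp.
by rewrite (dg0_idp (dg0 a)) (dg0_idp (dg0 b)) -!sc_rg sab.
Qed.

Lemma ipath0_dg x n : dg (ipath x nzero n) = n.
Proof. by rewrite ipath_dg ?nsubn0 //; apply: nle0n. Qed.

Lemma Zcyl_ipath0 x n : Zcyl (ipath x nzero n) x.
Proof. by rewrite /Zcyl ipath0_dg. Qed.

Lemma Zcyl_ipath_cat l x q : Zcyl l x -> nle (dg l) q ->
  sc l = rg (ipath x (dg l) q) /\ pcat l (ipath x (dg l) q) = ipath x nzero q.
Proof. by move=> xl lq; have := ipath_comp x (nle0n (dg l)) lq; rewrite xl. Qed.

Lemma Zcyl_cat l e x : sc l = rg e -> Zcyl (pcat l e) x ->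
  Zcyl l x /\ ipath x (dg l) (nadd (dg l) (dg e)) = e.
Proof.
move=> le; rewrite /Zcyl dg_comp // => xle.
have [lr comp] := ipath_comp x (nle0n (dg l)) (nle_addr (dg l) (dg e)).
apply: (factor_uniq lr le _ _ (etrans comp xle)); first by rewrite ipath0_dg.
by rewrite ipath_dg ?naddKn //; apply: nle_addr.
Qed.

Lemma Zcyl_ipath0_sub mu x y q : Zcyl mu x -> nle (dg mu) q ->
  Zcyl (ipath x nzero q) y -> Zcyl mu y.
Proof. by move=> xmu muq; have [src <-] := Zcyl_ipath_cat xmu muq; case/(Zcyl_cat src). Qed.

Lemma ipath_eq_suffix {x} {p p' m n : NN k} : nle m n ->
  ipath x p (nadd n p) = ipath x p' (nadd n p') ->
  ipath x (nadd m p) (nadd n p) = ipath x (nadd m p') (nadd n p').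
Proof.
move=> mn eq_n.
have [src comp] := ipath_comp x (nle_addl p m) (nle_add2r p mn).
have [src' comp'] := ipath_comp x (nle_addl p' m) (nle_add2r p' mn).
have dg_head r : dg (ipath x r (nadd m r)) = m.
  by rewrite ipath_dg ?naddnK //; apply: nle_addl.
have dg_tail r : dg (ipath x (nadd m r) (nadd n r)) = nsub n m.
  by rewrite ipath_dg ?nsubnDr //; apply: nle_add2r.
apply: (proj2 (factor_uniq src src' _ _ (etrans comp (etrans eq_n (esym comp'))))).
  by rewrite !dg_head.
by rewrite !dg_tail.
Qed.

Lemma Fab_sym a b y : Fab a b y -> Fab b a y.
Proof. by case=> ya [yb sh]; do 2!split=> //; move=> m n mn; rewrite sh. Qed.

Lemma Fab_Zcyl_cat a b e z : sc a = rg e -> sc b = rg e ->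
  Fab a b z -> Zcyl (pcat a e) z -> Zcyl (pcat b e) z.
Proof.
move=> ae be [_ [zb sh]] /(Zcyl_cat ae) [_ ze].
have := sh nzero (dg e) (nle0n _).
rewrite !nadd0n (naddC (dg e)) (naddC (dg e)) ze => ze'.
rewrite /Zcyl dg_comp //.
have [_ <-] := Zcyl_ipath_cat zb (nle_addr (dg b) (dg e)).
by rewrite -ze'.
Qed.

Lemma Zcyl_cat_swap a b g h z : sc a = rg g -> sc b = rg g -> sc g = rg h ->
  (forall y, Zcyl (pcat a g) y -> Fab a b y) ->
  Zcyl (pcat (pcat a g) h) z -> Zcyl (pcat (pcat b g) h) z.
Proof.
move=> ag bg gh agF zagh.
have [/agF zF _] := Zcyl_cat (etrans (sc_comp ag) gh) zagh.
rewrite comp_assoc //; apply: (Fab_Zcyl_cat _ _ zF); rewrite ?rg_comp //.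
by rewrite -comp_assoc.
Qed.

Lemma regular_Fab_interior a b x : regular x -> inSigma a b -> Fab a b x ->
  exists mu, Zcyl mu x /\ forall y, Zcyl mu y -> Fab a b y.
Proof.
move=> hx hab xF.
have [U [openU [Ux UF]]] : tinterior (Fab a b) x.
  by apply: NNPP => notint; apply: (hx a b hab); split=> // U _ Ux; exists x.
have [mu [xmu muU]] := openU x Ux.
by exists mu; split=> // y /muU /UF.
Qed.

Definition is_prefix l m : Prop := exists e, sc l = rg e /\ m = pcat l e.

(* The unique factorisation of s at degree n; junk unless nle n (dg s). *)
Definition factor_l s (n : NN k) : Pth L :=
  epsilon (inhabits s) (fun a => exists b, sc a = rg b /\ dg a = n /\ pcat a b = s).

Definition factor_r s (n : NN k) : Pth L :=
  epsilon (inhabits s) (fun b => sc (factor_l s n) = rg b /\ pcat (factor_l s n) b = s).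

Lemma factorP s n : nle n (dg s) ->
  [/\ sc (factor_l s n) = rg (factor_r s n), dg (factor_l s n) = n,
      dg (factor_r s n) = nsub (dg s) n & pcat (factor_l s n) (factor_r s n) = s].
Proof.
move=> ns.
have [a [b [ab [da [_ s_ab]]]]] := factor_ex (esym (nsubnKC ns)).
have [b' [lb' [dl lb'_s]]] :
    exists b, sc (factor_l s n) = rg b /\ dg (factor_l s n) = n /\ pcat (factor_l s n) b = s.
  apply: (epsilon_spec (inhabits s)
    (fun a => exists b, sc a = rg b /\ dg a = n /\ pcat a b = s)).
  by exists a, b.
have [lr lr_s] : sc (factor_l s n) = rg (factor_r s n) /\ pcat (factor_l s n) (factor_r s n) = s.
  apply: (epsilon_spec (inhabits s)
    (fun b => sc (factor_l s n) = rg b /\ pcat (factor_l s n) b = s)).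
  by exists b'.
split=> //.
by have := congr1 dg lr_s; rewrite dg_comp // dl => <-; rewrite naddKn.
Qed.

Lemma factor_cat a b : sc a = rg b ->
  factor_l (pcat a b) (dg a) = a /\ factor_r (pcat a b) (dg a) = b.
Proof.
move=> ab.
have le : nle (dg a) (dg (pcat a b)) by rewrite dg_comp //; apply: nle_addr.
have [lr dl dr lr_ab] := factorP le.
by apply: (factor_uniq lr ab dl _ lr_ab); rewrite dr dg_comp // naddKn.
Qed.

Lemma factor_r0 s : factor_r s nzero = s.
Proof. by have [_] := factor_cat (sc_idp (rg s)); rewrite pcomp_idl dg_idp. Qed.

Lemma factor_l_cat s e n : sc s = rg e -> nle n (dg s) ->
  factor_l (pcat s e) n = factor_l s n.
Proof.
move=> se ns; have [lr dl _ lr_s] := factorP ns.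
have rs : sc (factor_r s n) = rg e by rewrite -se -{2}lr_s sc_comp.
have l_re : sc (factor_l s n) = rg (pcat (factor_r s n) e) by rewrite rg_comp.
have [<- _] := factor_cat l_re.
by rewrite dl -comp_assoc // lr_s.
Qed.

Lemma factor_r_cat u p q : nle p q -> nle q (dg u) ->
  sc (factor_r (factor_l u q) p) = rg (factor_r u q) /\
  pcat (factor_r (factor_l u q) p) (factor_r u q) = factor_r u p.
Proof.
move=> pq qu.
have [lr dl _ lr_u] := factorP qu.
have pl : nle p (dg (factor_l u q)) by rewrite dl.
have [lr' dl' _ lr_l] := factorP pl.
have mid : sc (factor_r (factor_l u q) p) = rg (factor_r u q).
  by rewrite -lr -{2}lr_l sc_comp.
split=> //.
have l_rr : sc (factor_l (factor_l u q) p)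
             = rg (pcat (factor_r (factor_l u q) p) (factor_r u q)) by rewrite rg_comp.
have [_] := factor_cat l_rr.
by rewrite -comp_assoc // lr_l lr_u dl' => ->.
Qed.

Definition seg s (p q : NN k) : Pth L := factor_r (factor_l s q) p.

Lemma seg_dg s p q : nle p q -> nle q (dg s) -> dg (seg s p q) = nsub q p.
Proof.
move=> pq qs; have [_ dl _ _] := factorP qs.
have pl : nle p (dg (factor_l s q)) by rewrite dl.
by have [_ _ -> _] := factorP pl; rewrite dl.
Qed.

Lemma seg_comp s p q t : nle p q -> nle q t -> nle t (dg s) ->
  sc (seg s p q) = rg (seg s q t) /\ pcat (seg s p q) (seg s q t) = seg s p t.
Proof.
move=> pq qt ts; have [lr dl _ lr_s] := factorP ts.
have qu : nle q (dg (factor_l s t)) by rewrite dl.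
rewrite /seg -[in factor_l s q]lr_s factor_l_cat //.
exact: factor_r_cat.
Qed.

Lemma seg_catr s e p q : sc s = rg e -> nle q (dg s) -> seg (pcat s e) p q = seg s p q.
Proof. by move=> se qs; rewrite /seg factor_l_cat. Qed.

End Paths.

Lemma eq_big_In (T : Type) (V : nmodType) (F G : T -> V) (s : list T) :
  (forall x, In x s -> F x = G x) -> \sum_(x <- s) F x = \sum_(x <- s) G x.
Proof.
elim: s => [|y s IH] FG; first by rewrite !big_nil.
rewrite !big_cons FG /=; last by left.
by rewrite IH // => x xs; apply: FG; right.
Qed.

Section KPAlgebra.
Context {k : nat} {L : kgraph k} {R : comNzRingType} {A : algType R} (S : KPfamily L A).
Implicit Types (a b g l m n : Pth L) (x : infpath L).

Lemma kss_cat_ks a m : sc a = rg m -> kss S (pcat a m) * ks S a = kss S m.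
Proof. by move=> am; rewrite -(KP2b S am) -mulrA KP3a am (KP2d S m).2. Qed.

Lemma kss_ks_cat b n : sc b = rg n -> kss S b * ks S (pcat b n) = ks S n.
Proof. by move=> bn; rewrite -(KP2a S bn) mulrA KP3a bn (KP2c S n).1. Qed.

Lemma KP_sandwich a b m n : sc a = rg m -> sc b = rg n ->
  ks S (pcat a m) * kss S (pcat a m) * ks S a * kss S b * ks S (pcat b n) * kss S (pcat b n)
  = ks S (pcat a m) * (kss S m * ks S n) * kss S (pcat b n).
Proof.
move=> am bn.
rewrite -(mulrA _ _ (ks S a)) kss_cat_ks // -(mulrA _ (kss S b)) kss_ks_cat //.
by rewrite !mulrA.
Qed.

Lemma KP_sandwich_ortho a b m n : sc a = rg m -> sc b = rg n -> dg m = dg n -> m <> n ->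
  ks S (pcat a m) * kss S (pcat a m) * ks S a * kss S b * ks S (pcat b n) * kss S (pcat b n)
  = 0.
Proof. by move=> am bn dmn mn; rewrite KP_sandwich // (KP3b S dmn mn) mulr0 mul0r. Qed.

Lemma KP_sandwich_diag a b g : sc a = rg g -> sc b = rg g ->
  ks S (pcat a g) * kss S (pcat a g) * ks S a * kss S b * ks S (pcat b g) * kss S (pcat b g)
  = ks S (pcat a g) * kss S (pcat b g).
Proof. by move=> ag bg; rewrite KP_sandwich // KP3a -(sc_comp ag) (KP2c S _).2. Qed.

Lemma kss_ipath0_ks x a : ~ Zcyl a x -> kss S (ipath x nzero (dg a)) * ks S a = 0.
Proof. by move=> xa; apply: (KP3b S); [exact: ipath0_dg | move=> eq; apply: xa; rewrite /Zcyl eq]. Qed.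

Lemma kss_ks_ipath0 x b : ~ Zcyl b x -> kss S b * ks S (ipath x nzero (dg b)) = 0.
Proof. by move=> xb; apply: (KP3b S); [rewrite ipath0_dg | move=> eq; apply: xb; rewrite /Zcyl -eq]. Qed.

Lemma proj_mul_proj_prefix l m : is_prefix l m ->
  ks S l * kss S l * (ks S m * kss S m) = ks S m * kss S m.
Proof. by case=> e [le ->]; rewrite mulrA -(mulrA _ (kss S l)) kss_ks_cat // (KP2a S le). Qed.

Lemma proj_mul_proj_not_prefix l m : nle (dg l) (dg m) -> ~ is_prefix l m ->
  ks S l * kss S l * (ks S m * kss S m) = 0.
Proof.
move=> lm not_pre.
have [m1 [m2 [m12 [dm1 [_ em]]]]] := factor_ex (esym (nsubnKC lm)).
have neq : l <> m1 by move=> eq; apply: not_pre; exists m2; rewrite eq.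
rewrite em -(KP2a S m12) !mulrA -(mulrA _ (kss S l)) (KP3b S (esym dm1) neq).
by rewrite mulr0 !mul0r.
Qed.

Lemma proj_expand l (n : NN k) ls : n <> nzero -> NoDup ls ->
  (forall m, In m ls <-> rg m = rg l /\ dg m = n) ->
  ks S l * kss S l = \sum_(m <- ls) ks S l * kss S l * (ks S m * kss S m).
Proof.
move=> n0 uniq_ls ls_spec.
by rewrite -big_distrr /= -(KP4 S n0 uniq_ls ls_spec) -mulrA (KP2d S l).2.
Qed.

End KPAlgebra.

Section Extension.
Context {k : nat} {L : kgraph k} (hL : row_finite_no_sources L).
Implicit Types (a b g l m r : Pth L).

Definition unit_edge (v : Vx L) : Pth L :=
  proj1_sig (constructive_indefinite_description _ (proj2 (hL v nunit))).

Lemma unit_edgeP v : rg (unit_edge v) = v /\ dg (unit_edge v) = nunit.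
Proof. exact: proj2_sig (constructive_indefinite_description _ (proj2 (hL v nunit))). Qed.

Fixpoint grow r (j : nat) : Pth L :=
  if j is j'.+1 then pcat (grow r j') (unit_edge (sc (grow r j'))) else r.

Lemma grow_dg r j : dg (grow r j) = [ffun i => (dg r i + j)%N].
Proof.
elim: j => [|j IH] /=; first by apply/ffunP => i; rewrite ffunE addn0.
have [re de] := unit_edgeP (sc (grow r j)).
by rewrite dg_comp // IH de; apply/ffunP => i; rewrite !ffunE -addnA addn1.
Qed.

Lemma grow_cat r i j : exists e, sc (grow r i) = rg e /\ grow r (i + j) = pcat (grow r i) e.
Proof.
elim: j => [|j [e [ie e_ij]]]; first by exists (idp (sc (grow r i))); rewrite rg_idp addn0 pcomp_idr.
rewrite addnS /=; set u := unit_edge _.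
have e_u : sc e = rg u by rewrite (proj1 (unit_edgeP _)) e_ij sc_comp.
by exists (pcat e u); rewrite rg_comp // e_ij comp_assoc.
Qed.

Definition nsum (q : NN k) : nat := (\sum_(i < k) q i)%N.

Lemma nle_grow r q j : (nsum q <= j)%N -> nle q (dg (grow r j)).
Proof.
move=> qj i; rewrite grow_dg ffunE.
by rewrite (leq_trans _ (leq_addl (dg r i) j)) // (leq_trans _ qj) // /nsum (bigD1 i) //= leq_addr.
Qed.

Lemma seg_grow r p q j : (nsum q <= j)%N -> seg (grow r j) p q = seg (grow r (nsum q)) p q.
Proof.
move=> qj; have [e [qe e_j]] := grow_cat r (nsum q) (j - nsum q).
by rewrite subnKC // in e_j; rewrite e_j seg_catr //; apply: nle_grow.
Qed.

(* The infinite path through r: any prefix of the grown path of degree >= q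
   has the same segment between p and q (seg_grow). *)
Definition grow_ipath r (p q : NN k) : Pth L := seg (grow r (nsum q)) p q.

Lemma grow_ipath_dg r p q : nle p q -> dg (grow_ipath r p q) = nsub q p.
Proof. by move=> pq; rewrite seg_dg //; apply: nle_grow. Qed.

Lemma grow_ipath_id r p : grow_ipath r p p = idp (rg (grow_ipath r p p)).
Proof. by apply: dg0_idp; rewrite grow_ipath_dg ?nsubnn. Qed.

Lemma grow_ipath_comp r p q t : nle p q -> nle q t ->
  sc (grow_ipath r p q) = rg (grow_ipath r q t) /\
  pcat (grow_ipath r p q) (grow_ipath r q t) = grow_ipath r p t.
Proof.
move=> pq qt.
rewrite /grow_ipath -(seg_grow r p (leq_addr (nsum t) (nsum q))).
rewrite -(seg_grow r q (leq_addl (nsum q) (nsum t))) -(seg_grow r p (leq_addl (nsum q) (nsum t))).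
by apply: seg_comp => //; apply: nle_grow; rewrite leq_addl.
Qed.

Definition grow_infpath r : infpath L :=
  InfPath (grow_ipath_id r) (grow_ipath_dg r) (grow_ipath_comp r).

Lemma Zcyl_grow_infpath r : Zcyl r (grow_infpath r).
Proof.
rewrite /Zcyl /= /grow_ipath /seg.
have [e [re ->]] := grow_cat r 0 (nsum (dg r)).
by have [-> _] := factor_cat re; rewrite factor_r0.
Qed.

Lemma prefix_of_Zcyl l l' m : (forall z, Zcyl l z -> Zcyl l' z) ->
  nle (dg l') (dg m) -> is_prefix l m -> is_prefix l' m.
Proof.
move=> sub l'm [e [le em]]; subst m.
set z := grow_infpath (pcat l e).
have [/sub zl' _] := Zcyl_cat le (Zcyl_grow_infpath (pcat l e)).
have [l'z z_comp] := Zcyl_ipath_cat zl' l'm.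
exists (ipath z (dg l') (dg (pcat l e))); split=> //.
by rewrite z_comp; exact/esym/Zcyl_grow_infpath.
Qed.

Lemma enum_NoDup (v : Vx L) (n : NN k) :
  exists ls, NoDup ls /\ forall m, In m ls <-> rg m = v /\ dg m = n.
Proof.
have [[ls ls_spec] _] := hL v n.
exists (nodup (fun x y => excluded_middle_informative (x = y)) ls).
by split=> [|m]; [apply: NoDup_nodup | rewrite nodup_In].
Qed.

Lemma proj_eq_of_Zcyl l l' : (0 < k)%N -> (forall z, Zcyl l z <-> Zcyl l' z) ->
  forall (R : comNzRingType) (A : algType R) (S : KPfamily L A),
  ks S l * kss S l = ks S l' * kss S l'.
Proof.
move=> k_gt0 ll' R A S.
set D := nadd (nadd (dg l) (dg l')) nunit.
have lD : nle (dg l) D by move=> i; rewrite !ffunE -addnA leq_addr.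
have l'D : nle (dg l') D by move=> i; rewrite !ffunE addnAC leq_addl.
have prefix_iff m : dg m = D -> is_prefix l m <-> is_prefix l' m.
  by move=> dm; split; apply: prefix_of_Zcyl; rewrite ?dm // => z /ll'.
have rg_eq : rg l = rg l'.
  have [e [re de]] := proj2 (hL (sc l) (nsub D (dg l))).
  have le : sc l = rg e by rewrite re.
  have dle : dg (pcat l e) = D by rewrite dg_comp // de nsubnKC.
  have [e' [l'e' le_l'e']] := (prefix_iff _ dle).1 (ex_intro _ e (conj le erefl)).
  by rewrite -(rg_comp le) le_l'e' rg_comp.
have [ls [uniq_ls ls_spec]] := enum_NoDup (rg l) D.
(* (KP4) needs a nonzero degree, hence the hypothesis 0 < k. *)
have D0 : D <> nzero by apply: nadd_nunit_neq0.
rewrite (proj_expand S D0 uniq_ls ls_spec); rewrite rg_eq in ls_spec.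
rewrite (proj_expand S D0 uniq_ls ls_spec).
apply: eq_big_In => m /ls_spec [_ dm].
have [pre | not_pre] := classic (is_prefix l m).
  by rewrite !proj_mul_proj_prefix // -prefix_iff.
by rewrite !proj_mul_proj_not_prefix ?dm // -prefix_iff.
Qed.

Lemma cycline_of_Zcyl_Fab (R : comNzRingType) a b g : (0 < k)%N ->
  sc a = rg g -> sc b = rg g ->
  (forall y, Zcyl (pcat a g) y -> Fab a b y) -> (forall y, Zcyl (pcat b g) y -> Fab a b y) ->
  cycline L R (pcat a g) (pcat b g).
Proof.
move=> k_gt0 ag bg agF bgF; split; first by rewrite !sc_comp.
move=> h; rewrite (sc_comp ag) => gh A S.
apply: proj_eq_of_Zcyl => // z; split; first exact: Zcyl_cat_swap.
by apply: Zcyl_cat_swap => // y /bgF /Fab_sym.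
Qed.

End Extension.

Section Witnesses.
Context {k : nat} {L : kgraph k} (R : comNzRingType).
Implicit Types (a b mu : Pth L) (x : infpath L).

Lemma KP_ortho_of_not_Fab a b x : ~ Fab a b x ->
  exists mu nu : Pth L, Zcyl mu x /\ Zcyl nu x /\
    KP_eq L R (fun A S => ks S mu * kss S mu * ks S a * kss S b * ks S nu * kss S nu)
              (fun A S => 0).
Proof.
move=> notF.
have [xa | nxa] := classic (Zcyl a x); last first.
  exists (ipath x nzero (dg a)), (ipath x nzero (dg a)); split; [|split]; try exact: Zcyl_ipath0.
  by move=> A S; rewrite -(mulrA (ks S _)) kss_ipath0_ks // mulr0 !mul0r.
have [xb | nxb] := classic (Zcyl b x); last first.
  exists (ipath x nzero (dg b)), (ipath x nzero (dg b)); split; [|split]; try exact: Zcyl_ipath0.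
  by move=> A S; rewrite -(mulrA _ (kss S b)) kss_ks_ipath0 // mulr0 mul0r.
have [m [n [mn neq]]] : exists m n, nle m n /\
    ipath x (nadd m (dg a)) (nadd n (dg a)) <> ipath x (nadd m (dg b)) (nadd n (dg b)).
  apply: NNPP => all_eq; apply: notF; do 2!split=> //.
  by move=> m n mn; apply: NNPP => ne; apply: all_eq; exists m, n.
have [am amu] := Zcyl_ipath_cat xa (nle_addl (dg a) n).
have [bn bnu] := Zcyl_ipath_cat xb (nle_addl (dg b) n).
exists (ipath x nzero (nadd n (dg a))), (ipath x nzero (nadd n (dg b)));
  split; [|split]; try exact: Zcyl_ipath0.
move=> A S; rewrite -amu -bnu KP_sandwich_ortho //.
  by rewrite !ipath_dg ?naddnK //; apply: nle_addl.
by move/(ipath_eq_suffix mn).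
Qed.

Lemma Fab_interior_witness (hL : row_finite_no_sources L) a b mu x : (0 < k)%N ->
  Zcyl mu x -> (forall y, Zcyl mu y -> Fab a b y) ->
  exists g : Pth L, rg g = sc a /\ Zcyl (pcat a g) x /\ Zcyl (pcat b g) x /\
    KP_eq L R (fun A S => ks S (pcat a g) * kss S (pcat a g) * ks S a * kss S b
                          * ks S (pcat b g) * kss S (pcat b g))
              (fun A S => ks S (pcat a g) * kss S (pcat b g)) /\
    cycline L R (pcat a g) (pcat b g).
Proof.
move=> k_gt0 xmu muF; have [xa [xb sh]] := muF x xmu.
set g := ipath x (dg a) (nadd (dg mu) (dg a)).
have g_b : g = ipath x (dg b) (nadd (dg mu) (dg b)).
  by have := sh nzero (dg mu) (nle0n _); rewrite !nadd0n.
have [ag ag_x] := Zcyl_ipath_cat xa (nle_addl (dg a) (dg mu)).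
have [bg bg_x] := Zcyl_ipath_cat xb (nle_addl (dg b) (dg mu)).
rewrite -g_b in bg bg_x.
have agF y : Zcyl (pcat a g) y -> Fab a b y.
  by rewrite ag_x => /(Zcyl_ipath0_sub xmu (nle_addr _ _)) /muF.
have bgF y : Zcyl (pcat b g) y -> Fab a b y.
  by rewrite bg_x => /(Zcyl_ipath0_sub xmu (nle_addr _ _)) /muF.
exists g; split; first by rewrite ag.
split; first by rewrite ag_x; apply: Zcyl_ipath0.
split; first by rewrite bg_x; apply: Zcyl_ipath0.
split; first by move=> A S; rewrite KP_sandwich_diag.
exact: cycline_of_Zcyl_Fab.
Qed.

End Witnesses.

Theorem lemma5p3 (k : nat) (L : kgraph k) (R : comNzRingType)
  (hL : row_finite_no_sources L)
  (a b : Pth L) (hab : inSigma a b) (x : infpath L) (hx : regular x) :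
  (~ Fab a b x ->
     exists mu nu : Pth L, Zcyl mu x /\ Zcyl nu x /\
       KP_eq L R (fun A S => ks S mu * kss S mu * ks S a * kss S b * ks S nu * kss S nu)
               (fun A S => 0))
  /\
  (Fab a b x ->
     exists g : Pth L, rg g = sc a /\
       Zcyl (pcat a g) x /\ Zcyl (pcat b g) x /\
       KP_eq L R (fun A S => ks S (pcat a g) * kss S (pcat a g) * ks S a * kss S b
                            * ks S (pcat b g) * kss S (pcat b g))
               (fun A S => ks S (pcat a g) * kss S (pcat b g)) /\
       cycline L R (pcat a g) (pcat b g)).
Proof.
split; first exact: KP_ortho_of_not_Fab.
move=> xF; have [mu [xmu muF]] := regular_Fab_interior hx hab xF.
exact: (Fab_interior_witness R hL (inSigma_dim_gt0 hab) xmu muF).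
Qed.
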